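(* There is no opaque history $H$ (well-formed, with unique writes) containing a transaction $T_i$ that releases some variable $x$ early in $H$. Consequently opacity supports neither overwriting nor aborting early release.
   Context: Model. Shared variables have domain $\mathbb{N}_0$ and initial value $0$. A transaction $T_i$ executes $\mathit{init}_i$, $\mathit{read}_i(x)$ (returns a value or $A_i$), $\mathit{write}_i(x,v)$ (returns $ok_i$ or $A_i$), $\mathit{tryC}_i$ (returns $C_i$ or $A_i$), possibly $\mathit{tryA}_i$; each operation is an invocation and a response event. A history is a sequence of such events, $H|T_i$ the events of $T_i$; histories are well-formed and have unique writes (no value written twice to a variable, $0$ never written). $T_i$ is committed if $H|T_i$ contains $\mathit{tryC}_i\to C_i$, aborted if it contains a response $A_i$, commit-pending if it contains the invocation of $\mathit{tryC}_i$ without a $C_i/A_i$ response, live otherwise. A completion $\mathrm{Compl}(H)$ extends $H$ so that commit-pending transactions get response $C_i$, those with another pending operation get response $A_i$, other live ones get $\mathit{tryC}_i\to A_i$ (so live transactions become aborted). Equivalence: same per-transaction subhistories. Real-time order: $T_i\prec_H T_j$ iff the last event of $T_i$ precedes the first of $T_j$; $S$ preserves the real-time order of $H$ if $\prec_H\subseteq\prec_S$; sequential history: no two transactions concurrent. $\mathit{Seq}(x)$: sequences of complete operation executions on $x$ where each read returning a value returns the most recent preceding written value, or $0$ if none; sequential $S'$ legal iff $S'|x\in\mathit{Seq}(x)$ for all $x$. $\mathrm{vis}(S,T_i)$: longest subhistory of sequential $S$ consisting of $S|T_j$ for $j=i$ or $T_j$ committed in $S$ with $T_j\prec_S T_i$;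 $T_i$ legal in $S$ iff $\mathrm{vis}(S,T_i)$ legal. A finite $H$ is final-state opaque iff there is a sequential $S$ equivalent to some completion of $H$, preserving the real-time order of $H$, in which every transaction is legal. $H$ is opaque iff every finite prefix is final-state opaque. Early release: $T_i$ releases $x$ early in $H$ iff some prefix $P$ of $H$ has $T_i$ live in $P$ and some $T_j$ with a complete read $r_j(x)\to v$ in $P|T_j$, not preceded in $P|T_j$ by a write on $x$, preceded in $P$ by a write $w_i(x,v)$ of $T_i$. Supporting overwriting and supporting aborting early release both require (by definition) supporting early release. *)

From mathcomp Require Import all_boot.
Set Implicit Arguments. Unset Strict Implicit. Unset Printing Implicit Defensive.

Inductive op : Type :=
  | OInit
  | ORead  (x : nat)
  | OWrite (x v : nat)
  | OTryC
  | OTryA.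

Inductive res : Type :=
  | ROk
  | RVal (v : nat)
  | RCommit
  | RAbort.

Inductive event : Type :=
  | Inv  (i : nat) (o : op)
  | Resp (i : nat) (r : res).

Definition history := seq event.

Definition txid (e : event) : nat := match e with Inv i _ => i | Resp i _ => i end.

Definition sub (H : history) (i : nat) : history := [seq e <- H | txid e == i].

Definition occurs (H : history) (i : nat) : bool := has (fun e => txid e == i) H.

Definition resp_ok (o : op) (r : res) : bool :=
  match o, r with
  | OInit, ROk | OInit, RAbort => true
  | ORead _, RVal _ | ORead _, RAbort => true
  | OWrite _ _, ROk | OWrite _ _, RAbort => true
  | OTryC, RCommit | OTryC, RAbort => true
  | OTryA, RAbort => true
  | _, _ => false
  end.

Definition is_final (r : res) : bool :=
  match r with RCommit | RAbort => true | _ => false end.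

Definition is_init (o : op) : bool := if o is OInit then true else false.

(** A per-transaction subhistory alternates invocations and matching responses,
    starts with init, ends at the latest with C_i / A_i, and possibly has one
    last pending invocation. *)
Fixpoint wf_tx (first : bool) (s : history) : bool :=
  match s with
  | [::] => true
  | Inv _ o :: s' =>
      (if first then is_init o else ~~ is_init o) &&
      match s' with
      | [::] => true
      | Resp _ r :: s'' =>
          resp_ok o r && (if is_final r then nilp s'' else wf_tx false s'')
      | Inv _ _ :: _ => false
      end
  | Resp _ _ :: _ => false
  end.

Definition well_formed (H : history) : Prop := forall i, wf_tx true (sub H i).

Definition write_inv (e : event) : option (nat * nat) :=
  match e with Inv _ (OWrite x v) => Some (x, v) | _ => None end.

Definition unique_writes (H : history) : bool :=
  uniq (pmap write_inv H) && all (fun xv => xv.2 != 0) (pmap write_inv H).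

Definition is_commit_ev (e : event) : bool :=
  match e with Resp _ RCommit => true | _ => false end.
Definition is_abort_ev (e : event) : bool :=
  match e with Resp _ RAbort => true | _ => false end.
Definition is_tryC_inv (e : event) : bool :=
  match e with Inv _ OTryC => true | _ => false end.

Definition committed (s : history) : bool := has is_commit_ev s.
Definition aborted (s : history) : bool := has is_abort_ev s.
Definition commit_pending (s : history) : bool :=
  [&& has is_tryC_inv s, ~~ committed s & ~~ aborted s].
Definition live (s : history) : bool :=
  [&& ~~ committed s, ~~ aborted s & ~~ commit_pending s].

Definition last_is_inv (s : history) : bool :=
  match last (Resp 0 ROk) s with Inv _ _ => true | _ => false end.

Definition compl_tx (i : nat) (s : history) : history :=
  if [|| nilp s, committed s | aborted s] then s
  else if commit_pending s then rcons s (Resp i RCommit)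
  else if last_is_inv s then rcons s (Resp i RAbort)
  else s ++ [:: Inv i OTryC; Resp i RAbort].

Definition is_completion (H C : history) : Prop :=
  exists E, C = H ++ E /\ forall i, sub C i = compl_tx i (sub H i).

Definition equivalent (H1 H2 : history) : Prop := forall i, sub H1 i = sub H2 i.

(** T_i <_H T_j : the last event of T_i precedes the first event of T_j. *)
Definition prec (H : history) (i j : nat) : bool :=
  [&& occurs H i, occurs H j &
      ~~ has (fun e => txid e == i) (drop (find (fun e => txid e == j) H) H)].

Definition preserves_rt (S H : history) : Prop :=
  forall i j, prec H i j -> prec S i j.

Definition sequential (S : history) : Prop :=
  forall i j, i <> j -> occurs S i -> occurs S j -> prec S i j \/ prec S j i.

Definition vis (S : history) (i : nat) : history :=
  [seq e <- S | (txid e == i) || (committed (sub S (txid e)) && prec S (txid e) i)].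

(** The complete operation executions of a history, in order of invocation:
    an invocation paired with the next event of the same transaction, if that
    is a response. *)
Fixpoint execs (s : history) : seq (op * res) :=
  match s with
  | [::] => [::]
  | Inv i o :: s' =>
      match ohead [seq e <- s' | txid e == i] with
      | Some (Resp _ r) => (o, r) :: execs s'
      | _ => execs s'
      end
  | Resp _ _ :: s' => execs s'
  end.

Definition on_var (x : nat) (e : op * res) : bool :=
  match e.1 with ORead y => y == x | OWrite y _ => y == x | _ => false end.

(** Membership in Seq(x): every read returning a value returns the most
    recently written value (by a successful write), or 0 if none. *)
Fixpoint seq_legal (cur : nat) (l : seq (op * res)) : bool :=
  match l with
  | [::] => true
  | (ORead _, RVal v) :: l' => (v == cur) && seq_legal cur l'
  | (OWrite _ v, ROk) :: l' => seq_legal v l'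
  | _ :: l' => seq_legal cur l'
  end.

Definition legal (S : history) : Prop :=
  forall x, seq_legal 0 [seq e <- execs S | on_var x e].

Definition tx_legal (S : history) (i : nat) : Prop := legal (vis S i).

Definition final_state_opaque (H : history) : Prop :=
  exists C S, [/\ is_completion H C, equivalent S C, sequential S,
                  preserves_rt S H & forall i, occurs S i -> tx_legal S i].

Definition opaque (H : history) : Prop :=
  forall n, final_state_opaque (take n H).

Definition is_write_on (x : nat) (e : event) : bool :=
  match e with Inv _ (OWrite y _) => y == x | _ => false end.

(** T_i releases x early in H: in some prefix P, T_i is live and some T_j has
    a complete read r_j(x) -> v (invocation at q, response at r, no event of
    T_j in between), not preceded in P|T_j by a write of T_j on x, and
    preceded in P by the invocation of a write w_i(x,v) of T_i (at p < q). *)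
Definition releases_early (H : history) (i x : nat) : Prop :=
  exists n, let P := take n H in
  live (sub P i) /\
  exists j v p q r,
    [/\ p < q, q < r, r < size P,
        nth (Resp 0 ROk) P p = Inv i (OWrite x v) &
        nth (Resp 0 ROk) P q = Inv j (ORead x)] /\
    [/\ nth (Resp 0 ROk) P r = Resp j (RVal v),
        ~~ has (fun e => txid e == j) (take (r - q.+1) (drop q.+1 P)) &
        ~~ has (fun e => (txid e == j) && is_write_on x e) (take q P)].

From HB Require Import structures.
From mathcomp Require Import all_boot.

(* Let P be the prefix in which T_i is live while T_j has read from it the value
   v it wrote to x. Every completion of P aborts T_i, yet T_j's read is still
   present in vis(S, T_j) for any sequential witness S of final-state opacity
   of P. Since writes are unique and v <> 0, legality of vis(S, T_j) demands
   that T_i's write of v be visible to T_j; T_i is not T_j (which had not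
   written x before the read), so T_i would have to be committed in S. *)

Set Implicit Arguments.
Unset Strict Implicit.
Unset Printing Implicit Defensive.

Lemma op_comparable : comparable op.
Proof. by move=> a b; rewrite /decidable; decide equality; apply: eq_comparable. Qed.
HB.instance Definition _ := hasDecEq.Build op (compareP op_comparable).

Lemma res_comparable : comparable res.
Proof. by move=> a b; rewrite /decidable; decide equality; apply: eq_comparable. Qed.
HB.instance Definition _ := hasDecEq.Build res (compareP res_comparable).

Lemma event_comparable : comparable event.
Proof. by move=> a b; rewrite /decidable; decide equality; apply: eq_comparable. Qed.
HB.instance Definition _ := hasDecEq.Build event (compareP event_comparable).

Lemma seq_legal_read_value cur l y v :
  seq_legal cur l -> (ORead y, RVal v) \in l ->
  v = cur \/ exists y', (OWrite y' v, ROk) \in l.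
Proof.
elim: l cur => [|[o r] l IH] cur //= legal_l.
rewrite inE => /orP[/eqP read_hd|read_l].
  by move: legal_l; case: read_hd => <- <- /= /andP[/eqP]; left.
have [cur' [legal' cur'_src]] : exists cur', seq_legal cur' l /\
    (cur' = cur \/ exists z, (o, r) = (OWrite z cur', ROk)).
  case: o legal_l => [|z|z w||]; case: r => [|u||] //= legal_l; eauto.
  by case/andP: legal_l; eauto.
case: (IH cur' legal' read_l) => [->|[y' write_l]]; last first.
  by right; exists y'; rewrite inE write_l orbT.
case: cur'_src => [->|[z ->]]; first by left.
by right; exists z; rewrite inE eqxx.
Qed.

Lemma execs_cons_subset e s : {subset execs s <= execs (e :: s)}.
Proof.
case: e => [k o|k r] ex ex_s //=.
by case: ohead => [[k' o'|k' r']|] //; rewrite inE ex_s orbT.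
Qed.

Lemma mem_execs_inv s o r : (o, r) \in execs s -> exists k, Inv k o \in s.
Proof.
elim: s => [|e s IH] //=.
have IH' : (o, r) \in execs s -> exists k, Inv k o \in e :: s.
  by move=> /IH[k inv_s]; exists k; rewrite inE inv_s orbT.
case: e IH' => [k o'|k r'] IH' //=; case: ohead => [[k' o''|k' r'']|] //.
by rewrite inE => /orP[/eqP[-> _]|/IH']; [exists k; rewrite inE eqxx|].
Qed.

Lemma execs_adjacent s j a b o r :
  sub s j = a ++ Inv j o :: Resp j r :: b -> (o, r) \in execs s.
Proof.
elim: s a => [|e s IH] a; first by case: a.
rewrite /sub /=; case: eqP => [tx_e|_] sub_s; last exact/execs_cons_subset/(IH a).
case: a sub_s => [|e' a] /= [e_inv sub_s]; last exact/execs_cons_subset/(IH a).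
by rewrite e_inv /= sub_s inE eqxx.
Qed.

Lemma sub_split_adjacent (d : event) (P : history) j q r o res_r :
  q < r -> r < size P ->
  nth d P q = Inv j o -> nth d P r = Resp j res_r ->
  ~~ has (fun e => txid e == j) (take (r - q.+1) (drop q.+1 P)) ->
  sub P j = sub (take q P) j ++ Inv j o :: Resp j res_r :: sub (drop r.+1 P) j.
Proof.
move=> lt_qr lt_rP nth_q nth_r no_j_between.
have lt_qP : q < size P := ltn_trans lt_qr lt_rP.
rewrite -{1}(cat_take_drop q P) /sub filter_cat (drop_nth d lt_qP) nth_q /= eqxx.
rewrite -(cat_take_drop (r - q.+1) (drop q.+1 P)) filter_cat.
have -> : [seq e <- take (r - q.+1) (drop q.+1 P) | txid e == j] = [::].
  by move: no_j_between; rewrite has_filter negbK => /eqP.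
by rewrite drop_drop subnK // (drop_nth d lt_rP) nth_r /= eqxx.
Qed.

Lemma compl_tx_extends k s : exists t, compl_tx k s = s ++ t.
Proof.
rewrite /compl_tx; case: ifP => _; first by exists [::]; rewrite cats0.
case: ifP => _; first by exists [:: Resp k RCommit]; rewrite cats1.
case: ifP => _; first by exists [:: Resp k RAbort]; rewrite cats1.
by eexists.
Qed.

Lemma mem_compl_tx k s :
  {subset compl_tx k s <= s ++ [:: Inv k OTryC; Resp k RCommit; Resp k RAbort]}.
Proof.
move=> e; rewrite /compl_tx mem_cat !inE.
case: ifP => _; first by move->.
case: ifP => _; first by rewrite mem_rcons inE => /orP[->|->]; rewrite ?orbT.
case: ifP => _; first by rewrite mem_rcons inE => /orP[->|->]; rewrite ?orbT.
by rewrite mem_cat !inE => /orP[->|/orP[->|->]]; rewrite ?orbT.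
Qed.

Lemma committed_compl_tx_live k s : live s -> ~~ committed (compl_tx k s).
Proof.
case/and3P=> not_committed not_aborted not_pending.
rewrite /compl_tx (negbTE not_committed) (negbTE not_aborted) (negbTE not_pending) orbF.
case: ifP => _ //; case: ifP => _;
  by rewrite /committed -?cats1 has_cat /= orbF.
Qed.

Lemma sub_vis S j : sub (vis S j) j = sub S j.
Proof.
rewrite /sub /vis -filter_predI; apply: eq_filter => e /=.
by case: (txid e == j).
Qed.

Lemma pmap_uniq_inj (aT rT : eqType) (f : aT -> option rT) s a b y :
  uniq (pmap f s) -> a \in s -> b \in s -> f a = Some y -> f b = Some y -> a = b.
Proof.
elim: s => [|c s IH] //= uniq_cs.
have in_pmap d : d \in s -> f d = Some y -> y \in pmap f s.
  by move=> d_s fd; rewrite mem_pmap -fd map_f.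
have uniq_s : uniq (pmap f s) by case: (f c) uniq_cs => [z /andP[]|].
have fresh : f c = Some y -> y \notin pmap f s.
  by move=> fc; move: uniq_cs; rewrite fc => /andP[].
rewrite !inE => /predU1P[->|a_s] /predU1P[->|b_s] // fa fb.
- by case/negP: (fresh fa); apply: in_pmap b_s fb.
- by case/negP: (fresh fb); apply: in_pmap a_s fa.
- exact: IH.
Qed.

Lemma unique_writes_nonzero H k x v :
  unique_writes H -> Inv k (OWrite x v) \in H -> v != 0.
Proof.
case/andP=> _ /allP nonzero write_H; apply: (nonzero (x, v)).
by rewrite mem_pmap -[Some _]/(write_inv (Inv k (OWrite x v))) map_f.
Qed.

Lemma unique_writes_writer H k k' x v :
  unique_writes H -> Inv k (OWrite x v) \in H -> Inv k' (OWrite x v) \in H -> k = k'.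
Proof.
case/andP=> uniq_writes _ write_k write_k'.
by case: (pmap_uniq_inj uniq_writes write_k write_k' erefl erefl).
Qed.

Lemma legal_read_has_writer L x v :
  legal L -> (ORead x, RVal v) \in execs L -> v != 0 -> exists k, Inv k (OWrite x v) \in L.
Proof.
move=> legal_L read_L v_nz.
have read_x : (ORead x, RVal v) \in [seq e <- execs L | on_var x e].
  by rewrite mem_filter /on_var /= eqxx.
case: (seq_legal_read_value (legal_L x) read_x) => [v0|[y]].
  by rewrite v0 eqxx in v_nz.
by rewrite mem_filter /on_var /= => /andP[/eqP-> /mem_execs_inv].
Qed.

Section CompletedPrefix.

Variables P S : history.
Hypothesis sub_S : forall k, sub S k = compl_tx k (sub P k).

Lemma complete_read_visible (d : event) j q r o res_r :
  q < r -> r < size P ->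
  nth d P q = Inv j o -> nth d P r = Resp j res_r ->
  ~~ has (fun e => txid e == j) (take (r - q.+1) (drop q.+1 P)) ->
  (o, res_r) \in execs (vis S j) /\ occurs S j.
Proof.
move=> lt_qr lt_rP nth_q nth_r no_j_between.
have [t compl_j] := compl_tx_extends j (sub P j).
have sub_vis_j : sub (vis S j) j =
    sub (take q P) j ++ Inv j o :: Resp j res_r :: (sub (drop r.+1 P) j ++ t).
  by rewrite sub_vis sub_S compl_j (sub_split_adjacent lt_qr lt_rP nth_q nth_r no_j_between) -catA.
split; first exact: execs_adjacent sub_vis_j.
have : Inv j o \in sub S j by rewrite -sub_vis sub_vis_j mem_cat inE eqxx orbT.
by rewrite mem_filter => /andP[tx_j inv_S]; apply/hasP; exists (Inv j o).
Qed.

Lemma visible_write_origin j k y w :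
  Inv k (OWrite y w) \in vis S j ->
  Inv k (OWrite y w) \in P /\ (k = j \/ committed (compl_tx k (sub P k))).
Proof.
rewrite mem_filter /= => /andP[vis_k write_S].
have : Inv k (OWrite y w) \in sub S k by rewrite mem_filter /= eqxx.
rewrite sub_S => /mem_compl_tx; rewrite mem_cat !inE => /orP[|/or3P[]/eqP//].
rewrite mem_filter => /andP[_ write_P]; split=> //.
by case/orP: vis_k => [/eqP|/andP[]]; [left|rewrite sub_S; right].
Qed.

End CompletedPrefix.

Theorem mainTheorem4 (H : history) (i x : nat) :
  well_formed H -> unique_writes H -> opaque H -> ~ releases_early H i x.
Proof.
move=> _ uniq_writes_H opH [n /=]; set P := take n H.
move=> [live_i [j [v [p [q [r [[lt_pq lt_qr lt_rP nth_p nth_q] [nth_r between no_own_write]]]]]]]].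
have [C [S [[E [_ sub_C]] equiv_SC _ _ legal_S]]] := opH n.
have sub_S k : sub S k = compl_tx k (sub P k) by rewrite equiv_SC sub_C.
have lt_qP : q < size P := ltn_trans lt_qr lt_rP.
have write_i : Inv i (OWrite x v) \in take q P.
  by rewrite -nth_p -(nth_take _ lt_pq) mem_nth // size_takel // ltnW.
have write_i_H : Inv i (OWrite x v) \in H := mem_take (mem_take write_i).
have neq_ij : i != j.
  apply: contraNneq no_own_write => <-; apply/hasP; exists (Inv i (OWrite x v)) => //=.
  by rewrite !eqxx.
have [read_vis occurs_j] := complete_read_visible sub_S lt_qr lt_rP nth_q nth_r between.
have [k write_k] := legal_read_has_writer (legal_S j occurs_j) read_vis
  (unique_writes_nonzero uniq_writes_H write_i_H).
have [write_k_P k_visible] := visible_write_origin sub_S write_k.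
have eq_ki : k = i := unique_writes_writer uniq_writes_H (mem_take write_k_P) write_i_H.
case: k_visible => [eq_kj|]; first by rewrite -eq_kj eq_ki eqxx in neq_ij.
by rewrite eq_ki (negbTE (committed_compl_tx_live i live_i)).
Qed.
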